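(* Let $(B,\sqsubseteq)$ be an ordered functor such that $B$ preserves weak pullbacks and has a cofree comonad. Let $f\colon X\to BX$ and $g\colon Y\to BY$ be coalgebras and $h\colon X\to Y$ a function. (1) If $Bh(f(x))\sqsubseteq_{BY} g(h(x))$ for all $x\in X$, then $B^\infty h(f^\infty(x))\lesssim_{B^\infty Y} g^\infty(h(x))$ for all $x\in X$. (2) If $g(h(x))\sqsubseteq_{BY} Bh(f(x))$ for all $x\in X$, then $g^\infty(h(x))\lesssim_{B^\infty Y} B^\infty h(f^\infty(x))$ for all $x\in X$.
   Context: An ordered functor $(B,\sqsubseteq)$ is a functor $B\colon\mathsf{Set}\to\mathsf{Set}$ together with a preorder $\sqsubseteq_{BX}$ on $BX$ for every set $X$, such that $Bf\colon BX\to BY$ is monotone for every function $f\colon X\to Y$. For a relation $R\subseteq X\times Y$ with projections $\pi_1,\pi_2$, $\mathsf{Rel}(B)(R)=\{(b,c)\in BX\times BY\mid \exists d\in BR.\ B\pi_1(d)=b,\ B\pi_2(d)=c\}$ and $\mathsf{Rel}_{\sqsubseteq}(B)(R)=\{(b,c)\mid \exists b',c'.\ b\sqsubseteq_{BX}b',\ (b',c')\in\mathsf{Rel}(B)(R),\ c'\sqsubseteq_{BY}c\}$. Given coalgebras $f\colon X\to BX$, $g\colon Y\to BY$, a relation $R\subseteq X\times Y$ is a simulation if $(f(x),g(y))\in\mathsf{Rel}_{\sqsubseteq}(B)(R)$ for all $(x,y)\in R$; similarity is the greatest simulation. Cofree comonad: for each set $X$ there is a set $B^\infty X$ with maps $\theta_X\colon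 B^\infty X\to BB^\infty X$ and $\epsilon_X\colon B^\infty X\to X$ such that $\langle\theta_X,\epsilon_X\rangle$ is a final coalgebra for the functor $B(-)\times X$. For a coalgebra $f\colon X\to BX$, its coinductive extension $f^\infty\colon X\to B^\infty X$ is the unique $B(-)\times X$-coalgebra morphism from $\langle f,\mathrm{id}_X\rangle$ to $\langle\theta_X,\epsilon_X\rangle$. For $h\colon X\to Y$, $B^\infty h\colon B^\infty X\to B^\infty Y$ is the unique $B(-)\times Y$-coalgebra morphism from $\langle\theta_X,h\circ\epsilon_X\rangle$ to $\langle\theta_Y,\epsilon_Y\rangle$. The functor $B(-)\times X$ is ordered by $(b,x)\,\widetilde{\sqsubseteq}\,(c,y)$ iff $b\sqsubseteq c$ and $x=y$; $\lesssim_{B^\infty X}$ denotes the similarity of the coalgebra $\langle\theta_X,\epsilon_X\rangle$ with itself with respect to $(B(-)\times X,\widetilde{\sqsubseteq})$. *)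

Set Implicit Arguments.

Record OFunctor := {
  obj : Type -> Type;
  fmap : forall X Y : Type, (X -> Y) -> obj X -> obj Y;
  fmap_id : forall X (b : obj X), fmap (fun x : X => x) b = b;
  fmap_comp : forall X Y Z (f : X -> Y) (g : Y -> Z) (b : obj X),
      fmap (fun x => g (f x)) b = fmap g (fmap f b);
  ole : forall X, obj X -> obj X -> Prop;
  ole_refl : forall X (b : obj X), ole b b;
  ole_trans : forall X (a b c : obj X), ole a b -> ole b c -> ole a c;
  fmap_mono : forall X Y (f : X -> Y) (b c : obj X),
      ole b c -> ole (fmap f b) (fmap f c)
}.
Arguments fmap o {X Y} f b.
Arguments ole o {X} b c.

Definition relset {X Y : Type} (R : X -> Y -> Prop) : Type :=
  { p : X * Y | R (fst p) (snd p) }.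
Definition rpi1 {X Y} {R : X -> Y -> Prop} (p : relset R) : X := fst (proj1_sig p).
Definition rpi2 {X Y} {R : X -> Y -> Prop} (p : relset R) : Y := snd (proj1_sig p).

Definition RelB (B : OFunctor) {X Y} (R : X -> Y -> Prop)
  (b : obj B X) (c : obj B Y) : Prop :=
  exists d : obj B (relset R), fmap B rpi1 d = b /\ fmap B rpi2 d = c.

Definition RelLe (B : OFunctor) {X Y} (R : X -> Y -> Prop)
  (b : obj B X) (c : obj B Y) : Prop :=
  exists b' c', ole B b b' /\ RelB B R b' c' /\ ole B c' c.

(** Simulations and similarity (the greatest simulation = union of all simulations). *)
Definition simulation (B : OFunctor) {X Y} (f : X -> obj B X) (g : Y -> obj B Y)
  (R : X -> Y -> Prop) : Prop :=
  forall x y, R x y -> RelLe B R (f x) (g y).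

Definition similar (B : OFunctor) {X Y} (f : X -> obj B X) (g : Y -> obj B Y)
  (x : X) (y : Y) : Prop :=
  exists R, simulation B f g R /\ R x y.

Definition is_weak_pullback {X Y Z W : Type} (f : X -> Z) (g : Y -> Z)
  (p1 : W -> X) (p2 : W -> Y) : Prop :=
  (forall w, f (p1 w) = g (p2 w)) /\
  (forall x y, f x = g y -> exists w, p1 w = x /\ p2 w = y).

Definition preserves_weak_pullbacks (B : OFunctor) : Prop :=
  forall (X Y Z W : Type) (f : X -> Z) (g : Y -> Z) (p1 : W -> X) (p2 : W -> Y),
    is_weak_pullback f g p1 p2 ->
    is_weak_pullback (fmap B f) (fmap B g) (fmap B p1) (fmap B p2).

Section ProdFunctor.
Variables (B : OFunctor) (A : Type).
Definition pobj (S : Type) : Type := (obj B S * A)%type.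
Definition pfmap (S T : Type) (m : S -> T) (u : pobj S) : pobj T :=
  (fmap B m (fst u), snd u).
Definition pole (S : Type) (u v : pobj S) : Prop :=
  ole B (fst u) (fst v) /\ snd u = snd v.
Lemma pfmap_id S (u : pobj S) : pfmap (fun x : S => x) u = u.
Proof. destruct u; unfold pfmap; simpl; rewrite fmap_id; reflexivity. Qed.
Lemma pfmap_comp S T U (m : S -> T) (n : T -> U) (u : pobj S) :
  pfmap (fun x => n (m x)) u = pfmap n (pfmap m u).
Proof. destruct u; unfold pfmap; simpl; rewrite fmap_comp; reflexivity. Qed.
Lemma pole_refl S (u : pobj S) : pole u u.
Proof. split; [apply ole_refl | reflexivity]. Qed.
Lemma pole_trans S (u v w : pobj S) : pole u v -> pole v w -> pole u w.
Proof. intros [H1 H2] [H3 H4]; split; [eapply ole_trans; eauto | congruence]. Qed.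
Lemma pfmap_mono S T (m : S -> T) (u v : pobj S) : pole u v -> pole (pfmap m u) (pfmap m v).
Proof. intros [H1 H2]; split; simpl; [apply fmap_mono; auto | auto]. Qed.
End ProdFunctor.

Definition BxA (B : OFunctor) (A : Type) : OFunctor :=
  {| obj := pobj B A; fmap := @pfmap B A; fmap_id := @pfmap_id B A;
     fmap_comp := @pfmap_comp B A; ole := @pole B A; ole_refl := @pole_refl B A;
     ole_trans := @pole_trans B A; fmap_mono := @pfmap_mono B A |}.

Definition coalg_hom (F : OFunctor) {C D : Type} (c : C -> obj F C) (d : D -> obj F D)
  (m : C -> D) : Prop :=
  forall x, d (m x) = fmap F m (c x).

(** Cofree comonad: for each X, a final B(-) × X coalgebra <theta_X, eps_X> on B^∞ X. *)
Record Cofree (B : OFunctor) := {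
  Binf : Type -> Type;
  theta : forall X, Binf X -> obj B (Binf X);
  eps : forall X, Binf X -> X;
  final : forall (X C : Type) (c : C -> obj (BxA B X) C),
      { m : C -> Binf X |
        coalg_hom (BxA B X) c (fun t : Binf X => (theta t, eps t)) m /\
        forall m' : C -> Binf X,
          coalg_hom (BxA B X) c (fun t : Binf X => (theta t, eps t)) m' ->
          forall x, m' x = m x }
}.
Arguments Binf {B} c0 X.
Arguments theta {B} c0 {X} t.
Arguments eps {B} c0 {X} t.

Definition cofree_str {B} (cf : Cofree B) (X : Type) : Binf cf X -> obj (BxA B X) (Binf cf X) :=
  fun t => (theta cf t, eps cf t).

Definition coext {B} (cf : Cofree B) {X : Type} (f : X -> obj B X) : X -> Binf cf X :=
  proj1_sig (@final B cf X X (fun x => (f x, x))).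

Definition Binf_map {B} (cf : Cofree B) {X Y : Type} (h : X -> Y) : Binf cf X -> Binf cf Y :=
  proj1_sig (@final B cf Y (Binf cf X) (fun t => (theta cf t, h (eps cf t)))).

Definition simInf {B} (cf : Cofree B) (Y : Type) : Binf cf Y -> Binf cf Y -> Prop :=
  similar (BxA B Y) (cofree_str cf Y) (cofree_str cf Y).

(* The image R = {(B^∞h(f^∞ x), g^∞(h x)) | x ∈ X} is itself a simulation.
   Unfolding both sides, B^∞h(f^∞ x) steps to B(B^∞h ∘ f^∞)(f x) and
   g^∞(h x) to Bg^∞(g(h x)), which is comparable with B(g^∞ ∘ h)(f x) by the
   hypothesis and monotonicity of Bg^∞; both B-images of f x are then related
   by Rel(B)(R), witnessed by mapping f x into the graph of R. *)
Set Implicit Arguments.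

Section LaxHoms.
Variables (F : OFunctor) (S T I : Type).
Variables (c : S -> obj F S) (d : T -> obj F T) (k : I -> obj F I).
Variables (u : I -> S) (v : I -> T).
Hypothesis u_lax : forall i, ole F (c (u i)) (fmap F u (k i)).
Hypothesis v_oplax : forall i, ole F (fmap F v (k i)) (d (v i)).

Lemma lax_homs_similar i : similar F c d (u i) (v i).
Proof.
  set (R := fun s t => exists j, s = u j /\ t = v j).
  exists R; split; [| now exists i].
  intros s t [j [-> ->]].
  exists (fmap F u (k j)), (fmap F v (k j)).
  split; [apply u_lax | split; [| apply v_oplax]].
  set (graph := fun j0 => exist (fun p => R (fst p) (snd p)) (u j0, v j0)
                                (ex_intro _ j0 (conj eq_refl eq_refl))).
  exists (fmap F graph (k j)).
  split; rewrite <- fmap_comp; reflexivity.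
Qed.

End LaxHoms.

Section CofreeUnfolding.
Variables (B : OFunctor) (cf : Cofree B).

Lemma coext_hom X (f : X -> obj B X) x :
  (theta cf (coext cf f x), eps cf (coext cf f x)) = (fmap B (coext cf f) (f x), x).
Proof. exact (proj1 (proj2_sig (final cf (fun x0 => (f x0, x0)))) x). Qed.

Lemma theta_coext X (f : X -> obj B X) x :
  theta cf (coext cf f x) = fmap B (coext cf f) (f x).
Proof. exact (f_equal fst (coext_hom f x)). Qed.

Lemma eps_coext X (f : X -> obj B X) x : eps cf (coext cf f x) = x.
Proof. exact (f_equal snd (coext_hom f x)). Qed.

Lemma Binf_map_hom X Y (h : X -> Y) t :
  (theta cf (Binf_map cf h t), eps cf (Binf_map cf h t)) =
  (fmap B (Binf_map cf h) (theta cf t), h (eps cf t)).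
Proof. exact (proj1 (proj2_sig (final cf (fun t0 => (theta cf t0, h (eps cf t0))))) t). Qed.

Lemma theta_Binf_map X Y (h : X -> Y) t :
  theta cf (Binf_map cf h t) = fmap B (Binf_map cf h) (theta cf t).
Proof. exact (f_equal fst (Binf_map_hom h t)). Qed.

Lemma eps_Binf_map X Y (h : X -> Y) t : eps cf (Binf_map cf h t) = h (eps cf t).
Proof. exact (f_equal snd (Binf_map_hom h t)). Qed.

Lemma theta_Binf_map_coext X Y (f : X -> obj B X) (h : X -> Y) x :
  theta cf (Binf_map cf h (coext cf f x)) =
  fmap B (fun x0 => Binf_map cf h (coext cf f x0)) (f x).
Proof. now rewrite theta_Binf_map, theta_coext, <- fmap_comp. Qed.

Lemma eps_Binf_map_coext X Y (f : X -> obj B X) (h : X -> Y) x :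
  eps cf (Binf_map cf h (coext cf f x)) = h x.
Proof. now rewrite eps_Binf_map, eps_coext. Qed.

End CofreeUnfolding.

Theorem mainTheorem4 (B : OFunctor) (cf : Cofree B) :
  preserves_weak_pullbacks B ->
  forall (X Y : Type) (f : X -> obj B X) (g : Y -> obj B Y) (h : X -> Y),
    ((forall x, ole B (fmap B h (f x)) (g (h x))) ->
     forall x, simInf cf Y (Binf_map cf h (coext cf f x)) (coext cf g (h x))) /\
    ((forall x, ole B (g (h x)) (fmap B h (f x))) ->
     forall x, simInf cf Y (coext cf g (h x)) (Binf_map cf h (coext cf f x))).
Proof.
  intros _ X Y f g h.
  set (k := fun x : X => (f x, h x) : obj (BxA B Y) X).
  set (hf := fun x => Binf_map cf h (coext cf f x)).
  set (gh := fun x => coext cf g (h x)).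
  split; intros Hle x.
  - change (simInf cf Y (hf x) (gh x)).
    apply lax_homs_similar with (k := k); intros x0; unfold hf, gh; split; simpl.
    + rewrite theta_Binf_map_coext; apply ole_refl.
    + apply eps_Binf_map_coext.
    + rewrite theta_coext, (fmap_comp B h (coext cf g)); apply fmap_mono, Hle.
    + now rewrite eps_coext.
  - change (simInf cf Y (gh x) (hf x)).
    apply lax_homs_similar with (k := k); intros x0; unfold hf, gh; split; simpl.
    + rewrite theta_coext, (fmap_comp B h (coext cf g)); apply fmap_mono, Hle.
    + apply eps_coext.
    + rewrite theta_Binf_map_coext; apply ole_refl.
    + now rewrite eps_Binf_map_coext.
Qed.
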